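(* Let $(K,\delta)$ be a differential field and let $L_1,\ldots,L_k$ be nonzero elements of $K[\partial;\delta]$ of orders $r_1,\ldots,r_k$. Let $n\ge \operatorname{ord}(\mathrm{LCLM}(L_1,\ldots,L_k))$, and let $M_n$ be the block matrix with $k+1$ block rows and $k$ block columns whose $i$-th block row ($1\le i\le k$) has $S_n(L_i)$ in block column $i$ and zeros elsewhere, and whose last block row is $(S_n(-1),S_n(-1),\ldots,S_n(-1))$. Then: (i) If $L$ is a common left multiple of $L_1,\ldots,L_k$ with $\operatorname{ord}(L)\le n$ and $L=Q_1L_1=\cdots=Q_kL_k$, then the vector $(\phi_{n-r_1}(Q_1),\ldots,\phi_{n-r_k}(Q_k),\phi_n(L))$ belongs to the left kernel of $M_n$. (ii) If $(u_1,\ldots,u_k,u)$ is a nonzero vector in the left kernel of $M_n$, with $u_i\in K^{n+1-r_i}$ for $i=1,\ldots,k$ and $u\in K^{n+1}$, then $u$ is nonzero and $\phi_n^{-1}(u)$ is a common left multiple of $L_1,\ldots,L_k$ with respective left cofactors $\phi_{n-r_1}^{-1}(u_1),\ldots,\phi_{n-r_k}^{-1}(u_k)$, i.e. $\phi_n^{-1}(u)=\phi_{n-r_i}^{-1}(u_i)L_i$ for all $i$. (iii) If $\rho$ is the rank of $M_n$, then $\operatorname{ord}(\mathrm{LCLM}(L_1,\ldots,L_k))=\rho+\sum_{i=1}^k r_i-k(n+1)$.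
   Context: $(K,\delta)$ is a field with an additive map $\delta$ satisfying $\delta(ab)=a\delta(b)+\delta(a)b$. $K[\partial;\delta]$ is the ring of linear differential operators $\sum a_i\partial^i$, $a_i\in K$, with $\partial a=a\partial+\delta(a)$; the order of a nonzero operator is its degree in $\partial$. A common left multiple of nonzero $L_1,\ldots,L_k$ is an $L$ with $L=Q_1L_1=\cdots=Q_kL_k$ for some $Q_i\in K[\partial;\delta]$; an LCLM is a nonzero common left multiple of least order. $K[\partial;\delta]_{\le n}$ denotes operators of order at most $n$, and $\phi_n:K[\partial;\delta]_{\le n}\to K^{n+1}$ is the $K$-linear bijection $\sum_{i=0}^n a_i\partial^i\mapsto(a_n,a_{n-1},\ldots,a_0)$. For a nonzero $P$ of order $m$ and $n\ge m$, $S_n(P)$ is the $(n-m+1)\times(n+1)$ matrix whose rows are $\phi_n(\partial^{n-m}P),\phi_n(\partial^{n-m-1}P),\ldots,\phi_n(P)$ in this order (so $S_n(-1)$ is minus the identity of size $n+1$). Vectors are row vectors; the left kernel of a matrix $M$ is $\{v: vM=0\}$. *)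

From HB Require Import structures.
From mathcomp Require Import all_boot all_order all_algebra.
Set Implicit Arguments. Unset Strict Implicit. Unset Printing Implicit Defensive.
Import GRing.Theory.
Local Open Scope ring_scope.

(* Linear differential operators sum_i a_i d^i over a field K with a
   derivation delta are represented by their coefficient polynomials
   p : {poly K}, where p`_i is the coefficient a_i of d^i.  The ring
   structure of {poly K} is NOT used for operators; the (non-commutative)
   Ore product is [omul delta] below. *)

Section Ore.
Variables (K : fieldType) (delta : K -> K).

(* left multiplication by d : d * (sum b_j d^j) = sum (b_j d^(j+1) + delta(b_j) d^j) *)
Definition dmul1 (Q : {poly K}) : {poly K} := 'X * Q + map_poly delta Q.

Definition dpow (i : nat) (Q : {poly K}) : {poly K} := iter i dmul1 Q.

Definition omul (P Q : {poly K}) : {poly K} :=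
  \sum_(i < size P) P`_i *: dpow i Q.

Definition ord (P : {poly K}) : nat := (size P).-1.

Definition is_clm (k : nat) (Ls : 'I_k -> {poly K}) (L : {poly K}) : Prop :=
  exists Q : 'I_k -> {poly K}, forall i, L = omul (Q i) (Ls i).

Definition is_lclm (k : nat) (Ls : 'I_k -> {poly K}) (L : {poly K}) : Prop :=
  [/\ L != 0, is_clm Ls L &
      forall L', L' != 0 -> is_clm Ls L' -> (ord L <= ord L')%N].

Definition phi (n : nat) (P : {poly K}) : 'rV[K]_(n.+1) :=
  \row_(j < n.+1) P`_(n - j).

Definition phi_inv (n : nat) (u : 'rV[K]_(n.+1)) : {poly K} :=
  \poly_(i < n.+1) u 0 (inord (n - i)).

Definition Smx (n : nat) (P : {poly K}) : 'M[K]_((n - ord P).+1, n.+1) :=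
  \matrix_(i < (n - ord P).+1, j < n.+1) (phi n (dpow (n - ord P - i) P)) 0 j.

Lemma Smx_m1_rows (n : nat) : (n - ord (-1 : {poly K})).+1 = n.+1.
Proof. by rewrite /ord size_polyN size_poly1 subn0. Qed.

Definition Mn (n k : nat) (Ls : 'I_k -> {poly K}) :
  'M[K]_(\sum_(i < k) (n - ord (Ls i)).+1 + n.+1,
        \sum_(j < k) n.+1) :=
  col_mx
    (\mxblock_(i < k, j < k)
       (\matrix_(a < (n - ord (Ls i)).+1, b < n.+1)
          (if i == j then Smx n (Ls i) a b else 0)))
    (castmx (Smx_m1_rows n, erefl) (\mxrow_(j < k) Smx n (-1))).

End Ore.

Set Warnings "-notation-overridden,-ambiguous-paths".
From HB Require Import structures.
From mathcomp Require Import all_boot all_order all_algebra.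
From mathcomp Require Import zify.
Set Implicit Arguments.
Unset Strict Implicit.
Unset Printing Implicit Defensive.

Import GRing.Theory.
Local Open Scope ring_scope.

(* The Ore product is associative and admits right division with remainder, so
   every common left multiple of the L_i is a left multiple Q * Lc of the LCLM.
   Multiplying the coordinate row of Q by S_n(L) gives the coordinates of Q * L,
   hence the left kernel of M_n consists exactly of the coordinates of the
   common left multiples of order <= n together with their cofactors.  The
   projection of this kernel onto the last block is injective, and its image is
   the row space of S_n(Lc), whose n - ord Lc + 1 rows are independent since
   their orders are distinct; rank-nullity then yields the formula for ord Lc. *)

Section OreProduct.
Variables (K : fieldType) (delta : K -> K).
Hypothesis delta_add : forall a b : K, delta (a + b) = delta a + delta b.
Hypothesis delta_leib : forall a b : K, delta (a * b) = a * delta b + delta a * b.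

Lemma delta0 : delta 0 = 0.
Proof. by apply: (addrI (delta 0)); rewrite -delta_add !addr0. Qed.

Lemma deltaN a : delta (- a) = - delta a.
Proof. by apply/eqP; rewrite -addr_eq0 -delta_add addNr delta0. Qed.

Lemma delta1 : delta 1 = 0.
Proof.
have := delta_leib 1 1; rewrite !mul1r mulr1 => h.
by apply: (addrI (delta 1)); rewrite -h addr0.
Qed.

Lemma coef_dmul1 Q i :
  (dmul1 delta Q)`_i = (if i == 0%N then 0 else Q`_i.-1) + delta Q`_i.
Proof. by rewrite /dmul1 coefD coefXM coef_map_id0 // delta0. Qed.

Lemma dmul10 : dmul1 delta 0 = 0.
Proof. by apply/polyP => i; rewrite coef_dmul1 !coef0 delta0 addr0; case: ifP. Qed.

Lemma dmul1D : {morph dmul1 delta : x y / x + y}.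
Proof.
move=> x y; apply/polyP => i; rewrite coefD !coef_dmul1 !coefD delta_add.
by case: (i == 0%N); [rewrite !add0r | rewrite addrACA].
Qed.

Lemma dmul1Z c Q : dmul1 delta (c *: Q) = c *: dmul1 delta Q + delta c *: Q.
Proof.
apply/polyP => i; rewrite coef_dmul1 [RHS]coefD !coefZ coef_dmul1 delta_leib mulrDr.
by case: ifP => _; rewrite ?mulr0 ?add0r // addrA.
Qed.

Lemma dmul1_sum (I : Type) (r : seq I) (F : I -> {poly K}) :
  dmul1 delta (\sum_(j <- r) F j) = \sum_(j <- r) dmul1 delta (F j).
Proof. exact: (big_morph _ dmul1D dmul10). Qed.

Lemma dpowS i Q : dpow delta i.+1 Q = dmul1 delta (dpow delta i Q).
Proof. by rewrite /dpow iterS. Qed.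

Lemma dpow0 i : dpow delta i 0 = 0.
Proof. by elim: i => [//|i IH]; rewrite dpowS IH dmul10. Qed.

Lemma size_dmul1 Q : Q != 0 ->
  size (dmul1 delta Q) = (size Q).+1 /\ lead_coef (dmul1 delta Q) = lead_coef Q.
Proof.
move=> nzQ; have sQ : (0 < size Q)%N by rewrite size_poly_gt0.
have coef_top : (dmul1 delta Q)`_(size Q) = lead_coef Q.
  by rewrite coef_dmul1 lead_coefE [Q`_(size Q)]nth_default // delta0 addr0 gtn_eqF.
have size_le : (size (dmul1 delta Q) <= (size Q).+1)%N.
  apply/leq_sizeP => j hj; rewrite coef_dmul1 [Q`_j]nth_default ?delta0 ?addr0 1?ltnW //.
  by case: ifP => // _; rewrite nth_default //; case: j hj.
suff size_eq : size (dmul1 delta Q) = (size Q).+1 by rewrite lead_coefE size_eq.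
apply/eqP; rewrite eqn_leq size_le ltnNge; apply/negP => /leq_sizeP/(_ _ (leqnn _)).
by rewrite coef_top; apply/eqP; rewrite lead_coef_eq0.
Qed.

Lemma size_dpow i Q : Q != 0 ->
  size (dpow delta i Q) = (size Q + i)%N /\ lead_coef (dpow delta i Q) = lead_coef Q.
Proof.
move=> nzQ; elim: i => [|i [size_i lead_i]]; first by rewrite addn0.
have nz_i : dpow delta i Q != 0 by rewrite -size_poly_gt0 size_i addn_gt0 size_poly_gt0 nzQ.
by rewrite dpowS; have [-> ->] := size_dmul1 nz_i; rewrite size_i lead_i addnS.
Qed.

Lemma size_dpow_le i Q : (size (dpow delta i Q) <= size Q + i)%N.
Proof.
have [->|nzQ] := eqVneq Q 0; first by rewrite dpow0 size_poly0.
by rewrite (size_dpow i nzQ).1.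
Qed.

Lemma omul_widen (P Q : {poly K}) N : (size P <= N)%N ->
  omul delta P Q = \sum_(i < N) P`_i *: dpow delta i Q.
Proof.
move=> sPN; rewrite /omul (big_ord_widen N (fun i => P`_i *: dpow delta i Q) sPN).
rewrite big_mkcond; apply: eq_bigr => i _; case: ltnP => // hi.
by rewrite nth_default // scale0r.
Qed.

Lemma omul0l Q : omul delta 0 Q = 0.
Proof. by rewrite /omul size_poly0 big_ord0. Qed.

Lemma omul0r P : omul delta P 0 = 0.
Proof. by rewrite /omul big1 // => i _; rewrite dpow0 scaler0. Qed.

Lemma omulDl P P' Q : omul delta (P + P') Q = omul delta P Q + omul delta P' Q.
Proof.
rewrite (omul_widen Q (size_polyD P P')) (omul_widen Q (leq_maxl (size P) (size P'))).
rewrite (omul_widen Q (leq_maxr (size P) (size P'))).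
by rewrite -big_split; apply: eq_bigr => i _; rewrite coefD scalerDl.
Qed.

Lemma omulZl c P Q : omul delta (c *: P) Q = c *: omul delta P Q.
Proof.
rewrite (omul_widen _ (size_scale_leq c P)) scaler_sumr.
by apply: eq_bigr => i _; rewrite coefZ scalerA.
Qed.

Lemma omulBl P P' Q : omul delta (P - P') Q = omul delta P Q - omul delta P' Q.
Proof. by rewrite omulDl -scaleN1r omulZl scaleN1r. Qed.

Lemma omul_suml (I : Type) (r : seq I) (F : I -> {poly K}) Q :
  omul delta (\sum_(j <- r) F j) Q = \sum_(j <- r) omul delta (F j) Q.
Proof. exact: (big_morph (omul delta ^~ Q) (fun x y => omulDl x y Q) (omul0l Q)). Qed.

Lemma omulXn d Q : omul delta 'X^d Q = dpow delta d Q.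
Proof.
rewrite (omul_widen Q (eq_leq (size_polyXn K d))) big_ord_recr /= big1 ?add0r.
  by rewrite coefXn eqxx scale1r.
by move=> i _; rewrite coefXn ltn_eqF // scale0r.
Qed.

Lemma omul_dmul1 Q R : omul delta (dmul1 delta Q) R = dmul1 delta (omul delta Q R).
Proof.
have sQ1 : (size (dmul1 delta Q) <= (size Q).+1)%N.
  by have := size_dpow_le 1 Q; rewrite addn1.
rewrite (omul_widen _ sQ1) /omul dmul1_sum.
under eq_bigr do rewrite coef_dmul1 scalerDl.
under [RHS]eq_bigr do rewrite dmul1Z.
rewrite !big_split /=; congr (_ + _).
  by rewrite big_ord_recl /= scale0r add0r; apply: eq_bigr => i _; rewrite add0n.
by rewrite big_ord_recr /= nth_default // delta0 scale0r addr0.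
Qed.

Lemma omul_dpow i Q R : omul delta (dpow delta i Q) R = dpow delta i (omul delta Q R).
Proof. by elim: i => [//|i IH]; rewrite !dpowS omul_dmul1 IH. Qed.

Lemma omulA P Q R : omul delta (omul delta P Q) R = omul delta P (omul delta Q R).
Proof.
rewrite [omul delta P Q]/omul [RHS]/omul omul_suml; apply: eq_bigr => i _.
by rewrite omulZl omul_dpow.
Qed.

(* Only the top term (lead_coef P) d^(ord P) Q of the Ore sum reaches full degree. *)
Lemma size_omul P Q : P != 0 -> Q != 0 ->
  size (omul delta P Q) = ((size P).-1 + size Q)%N /\
  lead_coef (omul delta P Q) = lead_coef P * lead_coef Q.
Proof.
move=> nzP nzQ; have sP : (0 < size P)%N by rewrite size_poly_gt0.
have sQ : (0 < size Q)%N by rewrite size_poly_gt0.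
set s := (size P).-1.
have lead_P : lead_coef P = P`_s by rewrite lead_coefE.
have nz_s : P`_s != 0 by rewrite -lead_P lead_coef_eq0.
have [size_top lead_top] := size_dpow s nzQ.
have size_low : (size (\sum_(i < s) P`_i *: dpow delta i Q)%R < size Q + s)%N.
  apply: (@leq_ltn_trans (size Q + s).-1); last lia.
  apply: (big_ind (fun p : {poly K} => (size p <= (size Q + s).-1)%N)).
  - by rewrite size_poly0.
  - by move=> x y hx hy; apply: leq_trans (size_polyD _ _) _; rewrite geq_max hx hy.
  - move=> i _; apply: leq_trans (size_scale_leq _ _) _.
    by apply: leq_trans (size_dpow_le _ _) _; have := ltn_ord i; lia.
rewrite /omul -(prednK sP) big_ord_recr /= addrC.
rewrite size_polyDl ?lead_coefDl ?size_scale // ?size_top // lead_coefZ lead_top.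
by rewrite -lead_P addnC.
Qed.

Lemma size_omul_le P Q : (size (omul delta P Q) <= (size P).-1 + size Q)%N.
Proof.
have [->|nzP] := eqVneq P 0; first by rewrite omul0l size_poly0.
have [->|nzQ] := eqVneq Q 0; first by rewrite omul0r size_poly0.
by rewrite (size_omul nzP nzQ).1.
Qed.

Lemma omul_eq0 P Q : Q != 0 -> omul delta P Q = 0 -> P = 0.
Proof.
move=> nzQ PQ0; apply/eqP; apply/negPn/negP => nzP.
have := (size_omul nzP nzQ).1; rewrite PQ0 size_poly0.
by have := size_poly_gt0 Q; rewrite nzQ; lia.
Qed.

Lemma ord_omul_ler (P Q : {poly K}) : P != 0 -> Q != 0 -> (ord Q <= ord (omul delta P Q))%N.
Proof. by move=> nzP nzQ; rewrite /ord (size_omul nzP nzQ).1; lia. Qed.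

Lemma size_cofactor_le (Q L : {poly K}) n : L != 0 ->
  (size (omul delta Q L) <= n.+1)%N -> (size Q <= (n - ord L).+1)%N.
Proof.
move=> nzL; have [->|nzQ] := eqVneq Q 0; first by rewrite size_poly0.
have sQ : (0 < size Q)%N by rewrite size_poly_gt0.
have sL : (0 < size L)%N by rewrite size_poly_gt0.
by rewrite (size_omul nzQ nzL).1 /ord; lia.
Qed.

Lemma size_omul_cofactor_le (Q L : {poly K}) n : (ord L <= n)%N ->
  (size Q <= (n - ord L).+1)%N -> (size (omul delta Q L) <= n.+1)%N.
Proof.
by move=> hL hQ; apply: leq_trans (size_omul_le Q L) _; move: hL hQ; rewrite /ord; lia.
Qed.

Lemma omul_rdiv (L D : {poly K}) : D != 0 ->
  exists Q R, L = omul delta Q D + R /\ (size R < size D)%N.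
Proof.
move=> nzD; have sD : (0 < size D)%N by rewrite size_poly_gt0.
elim: {L}(size L) {-2}L (leqnn (size L)) => [|m IH] L sLm.
  by exists 0, L; rewrite omul0l add0r; split => //; lia.
have [ltLD|leDL] := ltnP (size L) (size D).
  by exists 0, L; rewrite omul0l add0r.
have nzL : L != 0 by rewrite -size_poly_gt0; lia.
set d := (size L - size D)%N; set c := lead_coef L / lead_coef D.
set T := c *: dpow delta d D.
have nzc : c != 0 by rewrite mulf_neq0 ?invr_eq0 ?lead_coef_eq0.
have [size_d lead_d] := size_dpow d nzD.
have size_T : size T = size L by rewrite size_scale // size_d; lia.
have lead_T : lead_coef T = lead_coef L.
  by rewrite lead_coefZ lead_d -mulrA mulVf ?mulr1 ?lead_coef_eq0.
have [Q [R [LT_eq sR]]] : exists Q R, L - T = omul delta Q D + R /\ (size R < size D)%N.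
  apply: IH; suff : (size (L - T)%R <= (size L).-1)%N by lia.
  apply/leq_sizeP => j; rewrite leq_eqVlt => /orP[/eqP <-|hj].
    by rewrite coefB -{2}size_T -!lead_coefE lead_T subrr.
  by rewrite coefB !nth_default ?subrr ?size_T //; move: hj; case: (size L).
exists (c *: 'X^d + Q), R; split => //.
by rewrite omulDl omulZl omulXn -addrA -LT_eq addrC subrK.
Qed.

Section CommonLeftMultiples.
Variables (k : nat) (Ls : 'I_k -> {poly K}).
Hypothesis Ls_nz : forall i, Ls i != 0.

Lemma ord_le_lclm (Lc : {poly K}) :
  is_lclm delta Ls Lc -> forall i, (ord (Ls i) <= ord Lc)%N.
Proof.
case=> nzLc [P LcP] _ i; rewrite (LcP i) ord_omul_ler //.
by apply: contraNneq nzLc => Pi0; rewrite (LcP i) Pi0 omul0l.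
Qed.

(* Right division by an LCLM leaves a common left multiple of smaller order,
   which must vanish. *)
Lemma lclm_dvd_clm (Lc L : {poly K}) : is_lclm delta Ls Lc -> is_clm delta Ls L ->
  exists Q, L = omul delta Q Lc.
Proof.
case=> nzLc [P LcP] Lc_min [Q' LQ'].
have [Q [R [LQR sR]]] := omul_rdiv L nzLc.
exists Q; suff R0 : R = 0 by rewrite LQR R0 addr0.
apply/eqP; apply: contraTT sR => nzR; rewrite -leqNgt.
suff : (ord Lc <= ord R)%N by rewrite /ord; have := size_poly_gt0 R; rewrite nzR; lia.
apply: Lc_min nzR _; exists (fun i => Q' i - omul delta Q (P i)) => i.
by rewrite omulBl omulA -LcP -LQ' LQR addrC addKr.
Qed.

End CommonLeftMultiples.

Lemma phi_inv_phi n (P : {poly K}) : (size P <= n.+1)%N -> phi_inv (phi n P) = P.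
Proof.
move=> sP; apply/polyP => j; rewrite coef_poly; case: ltnP => hj.
  by rewrite mxE inordK ?subKn // ltnS leq_subr.
by rewrite nth_default //; apply: leq_trans hj.
Qed.

Lemma phi_phi_inv n (u : 'rV[K]_n.+1) : phi n (phi_inv u) = u.
Proof.
apply/matrixP => i j; rewrite ord1 mxE coef_poly ifT ?ltnS ?leq_subr //.
by congr (u 0 _); apply: val_inj; rewrite /= inordK subKn // -ltnS.
Qed.

Lemma size_phi_inv n (u : 'rV[K]_n.+1) : (size (phi_inv u) <= n.+1)%N.
Proof. exact: size_poly. Qed.

Lemma phi0 n : phi n (0 : {poly K}) = 0.
Proof. by apply/matrixP => i j; rewrite !mxE coef0. Qed.

Lemma phi_inj n (P Q : {poly K}) : (size P <= n.+1)%N -> (size Q <= n.+1)%N ->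
  phi n P = phi n Q -> P = Q.
Proof. by move=> sP sQ ePQ; rewrite -(phi_inv_phi sP) -(phi_inv_phi sQ) ePQ. Qed.

(* The rows of S_n(L) are the coordinates of d^j L, so multiplying by S_n(L)
   is right multiplication by L. *)
Lemma phi_omul n (L Q : {poly K}) : (size Q <= (n - ord L).+1)%N ->
  phi (n - ord L) Q *m Smx delta n L = phi n (omul delta Q L).
Proof.
move=> sQ; apply/matrixP => i j; rewrite ord1 !mxE (omul_widen _ sQ) coef_sum.
rewrite [RHS](reindex_inj rev_ord_inj) /=.
by apply: eq_bigr => a _; rewrite !mxE coefZ /= subSS.
Qed.

Lemma Smx_row_free n (L : {poly K}) : L != 0 -> (ord L <= n)%N ->
  row_free (Smx delta n L).
Proof.
move=> nzL hL; rewrite -kermx_eq0 -submx0; apply/row_subP => r.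
set x := row r _; have : x *m Smx delta n L = 0 by apply/sub_kermxP; exact: row_sub.
have sx := size_phi_inv x.
rewrite -(phi_phi_inv x) phi_omul // -(phi0 n) => /phi_inj.
rewrite size_poly0 size_omul_cofactor_le // => /(_ isT isT)/(omul_eq0 nzL) ->.
by rewrite phi0 sub0mx.
Qed.

Lemma Smx_m1E n a b : Smx delta n (-1) a b = - (val a == val b)%:R.
Proof.
have ord_m1 : ord (-1 : {poly K}) = 0%N by rewrite /ord size_polyN size_poly1.
have dpow_m1 d : dpow delta d (-1) = - 'X^d.
  elim: d => [|d IH]; first by rewrite expr0.
  rewrite dpowS IH /dmul1 exprS mulrN (_ : map_poly _ _ = 0) ?addr0 //.
  apply/polyP => i; rewrite coef_map_id0 ?delta0 // coefN coefXn coef0.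
  by case: (i == d); rewrite ?deltaN ?delta1 ?delta0 ?oppr0.
have sub_m1 x : (n - ord (-1 : {poly K}) - x = n - x)%N by rewrite ord_m1 subn0.
rewrite !mxE sub_m1 dpow_m1 coefN coefXn.
have ha : (a <= n)%N by case: a => /= a; rewrite ord_m1 subn0.
have hb := ltn_ord b.
by congr (- _%:R); case: eqP => ab; case: eqP => ba //; exfalso; simpl in *; lia.
Qed.

Lemma mulmx_castmx m m' p q (e : m = m') (u : 'M[K]_(q, m')) (A : 'M[K]_(m, p)) :
  u *m castmx (e, erefl p) A = castmx (erefl q, esym e) u *m A.
Proof. by case: m' / e u => u; rewrite !castmx_id. Qed.

Lemma mul_castmx_neg_id n m' (e : n.+1 = m') (u : 'rV[K]_n.+1) (A : 'M[K]_(m', n.+1)) :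
  (forall a b, A a b = - (val a == val b)%:R) -> castmx (erefl 1%N, e) u *m A = - u.
Proof.
case: m' / e A => A A_eq; rewrite castmx_id.
suff -> : A = - 1%:M by rewrite mulmxN mulmx1.
by apply/matrixP => a b; rewrite A_eq !mxE val_eqE.
Qed.

Lemma mul_row_Mn n k (Ls : 'I_k -> {poly K})
    (us : forall i, 'rV[K]_((n - ord (Ls i)).+1)) (u : 'rV[K]_n.+1) :
  row_mx (\mxrow_(i < k) us i) u *m Mn delta n Ls =
  \mxrow_(j < k) (us j *m Smx delta n (Ls j) - u).
Proof.
rewrite /Mn mul_row_col mul_mxrow_mxblock mulmx_castmx mul_mxrow -mxrowD.
apply: eq_mxrow => j; congr (_ + _); last exact/mul_castmx_neg_id/Smx_m1E.
rewrite (bigD1 j) //= big1 ?addr0 => [|i /negPf neq_ij].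
  by congr (_ *m _); apply/matrixP => a b; rewrite mxE eqxx.
by rewrite (_ : \matrix_(a, b) _ = 0) ?mulmx0 //; apply/matrixP => a b; rewrite !mxE neq_ij.
Qed.

Lemma Mn_kerP n k (Ls : 'I_k -> {poly K})
    (us : forall i, 'rV[K]_((n - ord (Ls i)).+1)) (u : 'rV[K]_n.+1) :
  row_mx (\mxrow_(i < k) us i) u *m Mn delta n Ls = 0 <->
  forall j, us j *m Smx delta n (Ls j) = u.
Proof.
rewrite mul_row_Mn; split => [Mu0 j | Su].
  apply/eqP; rewrite -subr_eq0; apply/eqP.
  have := congr1 (fun M => @submxrow _ _ (fun=> n.+1) 1%N M j) Mu0.
  by rewrite mxrowK submxrow0.
rewrite -(mxrow0 (q_ := fun=> n.+1)); apply: eq_mxrow => j.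
by rewrite Su subrr.
Qed.

Section BlockMatrix.
Variables (n k : nat) (Ls : 'I_k -> {poly K}).
Hypothesis Ls_nz : forall i, Ls i != 0.

Lemma Mn_ker_of_clm (L : {poly K}) (Q : 'I_k -> {poly K}) :
  (ord L <= n)%N -> (forall i, L = omul delta (Q i) (Ls i)) ->
  row_mx (\mxrow_(i < k) phi (n - ord (Ls i)) (Q i)) (phi n L) *m Mn delta n Ls = 0.
Proof.
move=> hL LQ; apply/Mn_kerP => j; rewrite (LQ j) phi_omul //.
by apply: size_cofactor_le (Ls_nz j) _; rewrite -LQ; move: hL; rewrite /ord; lia.
Qed.

Hypothesis ord_Ls_le : forall i, (ord (Ls i) <= n)%N.

Lemma clm_of_Mn_ker (us : forall i, 'rV[K]_((n - ord (Ls i)).+1)) (u : 'rV[K]_n.+1) :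
  row_mx (\mxrow_(i < k) us i) u *m Mn delta n Ls = 0 ->
  (forall i, phi_inv u = omul delta (phi_inv (us i)) (Ls i)) /\
  (u = 0 -> forall i, us i = 0).
Proof.
move/Mn_kerP => Su.
have size_us i : (size (omul delta (phi_inv (us i)) (Ls i)) <= n.+1)%N.
  exact/size_omul_cofactor_le/size_phi_inv.
have cofactor i : phi_inv u = omul delta (phi_inv (us i)) (Ls i).
  by rewrite -(Su i) -{1}(phi_phi_inv (us i)) phi_omul ?size_phi_inv ?phi_inv_phi.
split=> // u0 i; rewrite -(phi_phi_inv (us i)).
suff /(omul_eq0 (Ls_nz i)) -> : omul delta (phi_inv (us i)) (Ls i) = 0 by rewrite phi0.
by apply: (phi_inj (size_us i)) => //; rewrite ?size_poly0 // -cofactor phi_phi_inv phi0.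
Qed.

End BlockMatrix.

Definition rproj m p : 'M[K]_(m + p, p) := col_mx 0 1%:M.

Lemma mulmx_rproj q m p (v : 'M[K]_(q, m + p)) : v *m rproj m p = rsubmx v.
Proof. by rewrite -{1}(hsubmxK v) mul_row_col mulmx0 add0r mulmx1. Qed.

Section RankMn.
Variables (n k : nat) (Ls : 'I_k -> {poly K}) (Lc : {poly K}).
Hypotheses (Ls_nz : forall i, Ls i != 0) (Lc_lclm : is_lclm delta Ls Lc).
Hypothesis ord_Lc_le : (ord Lc <= n)%N.

Let ord_Ls_le i : (ord (Ls i) <= n)%N.
Proof. exact: leq_trans (ord_le_lclm Ls_nz Lc_lclm i) ord_Lc_le. Qed.

Let N := (\sum_(i < k) (n - ord (Ls i)).+1)%N.

Let row_blocksE (v : 'rV[K]_(N + n.+1)) :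
  v = row_mx (\mxrow_(i < k) submxrow (lsubmx v) i) (rsubmx v).
Proof. by rewrite submxrowK hsubmxK. Qed.

(* By [clm_of_Mn_ker], a kernel vector with vanishing last block vanishes. *)
Lemma rank_kermx_Mn :
  \rank (kermx (Mn delta n Ls)) = \rank (kermx (Mn delta n Ls) *m rproj N n.+1).
Proof.
rewrite -(mxrank_mul_ker _ (rproj N n.+1)) -[RHS]addn0; congr (_ + _)%N.
apply/eqP; rewrite mxrank_eq0 -submx0; apply/row_subP => r.
have := row_sub r (kermx (Mn delta n Ls) :&: kermx (rproj N n.+1))%MS.
set v := row r _; rewrite sub_capmx => /andP[/sub_kermxP Mv0 /sub_kermxP].
rewrite mulmx_rproj => v2_0; rewrite (row_blocksE v) v2_0 in Mv0 *.
have [_ /(_ erefl) us0] := clm_of_Mn_ker Ls_nz ord_Ls_le Mv0.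
rewrite (_ : \mxrow_(i < k) _ = 0) ?row_mx0 ?sub0mx //.
by rewrite -(mxrow0 (q_ := fun i => (n - ord (Ls i)).+1)); apply: eq_mxrow.
Qed.

(* By [clm_of_Mn_ker] and [lclm_dvd_clm], the last blocks of kernel vectors are
   exactly the coordinates of the left multiples of Lc of order at most n. *)
Lemma kermx_Mn_rproj : (kermx (Mn delta n Ls) *m rproj N n.+1 == Smx delta n Lc)%MS.
Proof.
have [nzLc [P LcP] _] := Lc_lclm.
apply/andP; split; apply/row_subP => r.
  rewrite row_mul mulmx_rproj.
  have : row r (kermx (Mn delta n Ls)) *m Mn delta n Ls = 0.
    exact/sub_kermxP/row_sub.
  rewrite {1}(row_blocksE (row r _)) => /(clm_of_Mn_ker Ls_nz ord_Ls_le)[cofactor _].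
  set u := rsubmx _ in cofactor *.
  have [Q LQ] := lclm_dvd_clm Lc_lclm (ex_intro _ _ cofactor).
  have sQ : (size Q <= (n - ord Lc).+1)%N.
    by apply: size_cofactor_le nzLc _; rewrite -LQ size_phi_inv.
  by rewrite -(phi_phi_inv u) LQ -phi_omul // submxMl.
set d := (n - ord Lc - r)%N.
have -> : row r (Smx delta n Lc) = phi n (omul delta 'X^d Lc).
  by apply/matrixP => i j; rewrite omulXn !mxE.
have ord_d : (ord (omul delta 'X^d Lc) <= n)%N.
  rewrite omulXn /ord (size_dpow d nzLc).1.
  by have := ltn_ord r; move: ord_Lc_le; rewrite /d /ord; lia.
have cofactor i : omul delta 'X^d Lc = omul delta (omul delta 'X^d (P i)) (Ls i).
  by rewrite omulA -LcP.
have /sub_kermxP := Mn_ker_of_clm Ls_nz ord_d cofactor.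
by move/(submxMr (rproj N n.+1)); rewrite mulmx_rproj row_mxKr.
Qed.

Lemma rank_Mn : \rank (Mn delta n Ls) = (N + n.+1 - (n - ord Lc).+1)%N.
Proof.
have [nzLc _ _] := Lc_lclm.
have := mxrank_ker (Mn delta n Ls); have := rank_leq_row (Mn delta n Ls).
rewrite rank_kermx_Mn (eqmx_rank kermx_Mn_rproj).
by have /eqP -> := Smx_row_free nzLc ord_Lc_le; lia.
Qed.

End RankMn.
End OreProduct.

Theorem theorem3 (K : fieldType) (delta : K -> K)
  (delta_add : forall a b : K, delta (a + b) = delta a + delta b)
  (delta_leib : forall a b : K, delta (a * b) = a * delta b + delta a * b)
  (k : nat) (Ls : 'I_k -> {poly K}) (Ls_nz : forall i, Ls i != 0)
  (Lc : {poly K}) (HLc : is_lclm delta Ls Lc)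
  (n : nat) (Hn : (ord Lc <= n)%N) :
  (* (i) *)
  (forall (L : {poly K}) (Q : 'I_k -> {poly K}),
     (ord L <= n)%N -> (forall i, L = omul delta (Q i) (Ls i)) ->
     row_mx (\mxrow_(i < k) phi (n - ord (Ls i)) (Q i)) (phi n L)
       *m Mn delta n Ls = 0)
  /\
  (* (ii) *)
  (forall (us : forall i : 'I_k, 'rV[K]_((n - ord (Ls i)).+1)) (u : 'rV[K]_(n.+1)),
     row_mx (\mxrow_(i < k) us i) u *m Mn delta n Ls = 0 ->
     ((exists i, us i != 0) \/ u != 0) ->
     u != 0 /\
     forall i, phi_inv u = omul delta (phi_inv (us i)) (Ls i))
  /\
  (* (iii) *)
  ((ord Lc)%:Z = (\rank (Mn delta n Ls))%:Z + (\sum_(i < k) ord (Ls i))%:Z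
                  - (k * n.+1)%:Z).
Proof.
have ord_Ls_le i : (ord (Ls i) <= n)%N.
  exact: leq_trans (ord_le_lclm delta_add Ls_nz HLc i) Hn.
split; first exact: Mn_ker_of_clm.
split=> [us u /(clm_of_Mn_ker delta_add delta_leib Ls_nz ord_Ls_le)[cofactor us0] nz|].
  split=> //; apply/eqP => u0.
  by case: nz => [[i /eqP []]|/eqP //]; exact: us0.
rewrite (rank_Mn delta_add delta_leib Ls_nz HLc Hn).
have sum_blocks : (\sum_(i < k) (n - ord (Ls i)).+1 + \sum_(i < k) ord (Ls i) = k * n.+1)%N.
  rewrite -big_split /= (eq_bigr (fun=> n.+1)) ?sum_nat_const ?card_ord // => i _.
  by have := ord_Ls_le i; lia.
by move: sum_blocks Hn; lia.
Qed.
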